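(* Consider the $(1+1)$-dimensional Born-Infeld system with $a=c=1$ for a density $\rho(t,x)>0$ and a momentum $p(t,x)$, $(t,x)\in\mathbb{R}^2$: $$\frac{\partial\rho}{\partial t}=-\frac{\partial}{\partial x}\left(p\frac{\sqrt{\rho^2+1}}{\sqrt{1+p^2}}\right),\qquad \frac{\partial p}{\partial t}=-\frac{\partial}{\partial x}\left(\rho\frac{\sqrt{1+p^2}}{\sqrt{\rho^2+1}}\right),$$ restricted to states satisfying the constraint $p\rho=1$. Assume that the densities $\rho$ under consideration satisfy $0<\gamma:=\inf_{(t,x)\in\mathbb{R}^2}\rho(t,x)$ and $\beta:=\sup_{(t,x)\in\mathbb{R}^2}\rho(t,x)<\infty$. Then the constant state $(p_e,\rho_e)=(1,1)$ is a Lyapunov-stable equilibrium point of this system on the constraint set $p\rho=1$, where stability is measured in the norm $$\|\Delta u\|^2=\int_{\mathbb{R}}\frac{(\Delta\rho)^2}{\beta}\,\mathrm{d}x,\qquad \Delta u=(p-p_e,\rho-\rho_e),\ \Delta\rho=\rho-\rho_e.$$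
   Context: An equilibrium point $u_e$ of an evolution equation $\partial_t u=X(u)$ is a state with $X(u_e)=0$. It is Lyapunov stable with respect to a norm $\|\cdot\|$ if for every $\varepsilon>0$ there is $\sigma>0$ such that every solution $u(t,\cdot)$ with $\|u(t_0,\cdot)-u_e\|<\sigma$ satisfies $\|u(t,\cdot)-u_e\|<\varepsilon$ for all $t\ge t_0$. The system is Hamiltonian with Hamiltonian $H=\int\sqrt{\rho^2c^2+a^2}\sqrt{c^2+p^2}\,\mathrm{d}x$ (here $a=c=1$) and Poisson bracket $\{F,G\}=-\int\left(\frac{\delta F}{\delta\rho}\partial_x\frac{\delta G}{\delta p}+\frac{\delta F}{\delta p}\partial_x\frac{\delta G}{\delta\rho}\right)\mathrm{d}x$. *)

From HB Require Import structures.
From mathcomp Require Import all_boot all_order all_algebra.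
From mathcomp Require Import all_classical all_reals all_analysis.
Set Implicit Arguments. Unset Strict Implicit. Unset Printing Implicit Defensive.
Import Order.TTheory GRing.Theory Num.Theory.
Import numFieldNormedType.Exports.
Local Open Scope classical_set_scope.
Local Open Scope ring_scope.

Section BornInfeld.
Variable R : realType.

Definition bi_flux_rho (r q : R) : R :=
  q * Num.sqrt (r ^+ 2 + 1) / Num.sqrt (1 + q ^+ 2).

Definition bi_flux_p (r q : R) : R :=
  r * Num.sqrt (1 + q ^+ 2) / Num.sqrt (r ^+ 2 + 1).

Definition BI_solution (rho p : R -> R -> R) : Prop :=
  forall t x : R,
    derivable (fun s => rho s x) t 1 /\
        derivable (fun s => p s x) t 1 /\
        derivable (fun y => bi_flux_rho (rho t y) (p t y)) x 1 /\
        derivable (fun y => bi_flux_p (rho t y) (p t y)) x 1 /\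
        derive1 (fun s => rho s x) t
          = - derive1 (fun y => bi_flux_rho (rho t y) (p t y)) x
      /\ derive1 (fun s => p s x) t
          = - derive1 (fun y => bi_flux_p (rho t y) (p t y)) x.

Definition on_constraint (rho p : R -> R -> R) : Prop :=
  forall t x : R, p t x * rho t x = 1.

Definition rho_values (rho : R -> R -> R) : set R :=
  range (fun tx : R * R => rho tx.1 tx.2).

Definition dev_normsq (beta rho_e : R) (r : R -> R) : \bar R :=
  (\int[@lebesgue_measure R]_(x in [set: R]) (((r x - rho_e) ^+ 2 / beta)%:E))%E.

End BornInfeld.

From HB Require Import structures.
From mathcomp Require Import all_boot all_order all_algebra.
From mathcomp Require Import all_classical all_reals all_analysis.
Set Implicit Arguments. Unset Strict Implicit. Unset Printing Implicit Defensive.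
Import Order.TTheory GRing.Theory Num.Theory.
Local Open Scope classical_set_scope.
Local Open Scope ring_scope.

(* On the constraint p rho = 1 with rho > 0 we have sqrt(1 + p^2) = p sqrt(rho^2 + 1),
   so the flux of the rho-equation is identically 1.  Hence d_t rho = 0: every
   constrained solution has a time-independent density, the norm of the deviation
   from (1, 1) is conserved, and sigma = eps works. *)

Section Constraint.
Variable R : realType.
Implicit Types r q : R.

Lemma constraint_gt0 r q : 0 < r -> q * r = 1 -> 0 < q.
Proof. by move=> r_gt0 qr1; rewrite -(pmulr_lgt0 _ r_gt0) qr1. Qed.

Lemma sqrt_1_sqr_constraint r q : 0 < r -> q * r = 1 ->
  Num.sqrt (1 + q ^+ 2) = Num.sqrt (r ^+ 2 + 1) * q.
Proof.
move=> r_gt0 qr1; have q_gt0 := constraint_gt0 r_gt0 qr1.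
have -> : 1 + q ^+ 2 = (r ^+ 2 + 1) * q ^+ 2.
  by rewrite mulrDl -exprMn mulrC qr1 expr1n mul1r.
by rewrite sqrtrM ?sqrtr_sqr ?gtr0_norm // addr_ge0 // sqr_ge0.
Qed.

Lemma sqrt_sqr_add1_gt0 r : 0 < Num.sqrt (r ^+ 2 + 1).
Proof. by rewrite sqrtr_gt0 ltr_wpDl // sqr_ge0. Qed.

Lemma bi_flux_rho_constraint r q : 0 < r -> q * r = 1 -> bi_flux_rho r q = 1.
Proof.
move=> r_gt0 qr1; have q_gt0 := constraint_gt0 r_gt0 qr1.
rewrite /bi_flux_rho (sqrt_1_sqr_constraint r_gt0 qr1) [_ * q]mulrC divff //.
by rewrite mulf_neq0 ?gt_eqF ?sqrt_sqr_add1_gt0.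
Qed.

End Constraint.

Lemma BI_solution_cst (R : realType) (r q : R) :
  BI_solution (fun _ _ => r) (fun _ _ => q).
Proof. by move=> t x; rewrite !derive1_cst oppr0; do !split; exact: derivable_cst. Qed.

Lemma BI_constraint_rho_stationary (R : realType) (rho p : R -> R -> R) :
  BI_solution rho p -> on_constraint rho p -> (forall t x, 0 < rho t x) ->
  forall t t', rho t = rho t'.
Proof.
move=> sol con rho_gt0 t t'; apply/funext => x.
apply: (@is_derive_0_is_cst _ (rho^~ x)) => s.
have [d_rho [_ [_ [_ [dt_rho _]]]]] := sol s x.
have flux1 : (fun y => bi_flux_rho (rho s y) (p s y)) = cst 1.
  by apply/funext => y; rewrite bi_flux_rho_constraint.
rewrite flux1 derive1_cst oppr0 derive1E in dt_rho.
by rewrite -dt_rho; exact: derivableP d_rho.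
Qed.

Theorem mainTheorem2 (R : realType) :
  (BI_solution (fun _ _ : R => 1) (fun _ _ : R => 1) /\
   on_constraint (fun _ _ : R => 1) (fun _ _ : R => 1)) /\
  forall eps : R, 0 < eps ->
  exists sigma : R, 0 < sigma /\
  forall (rho p : R -> R -> R) (t0 : R),
    BI_solution rho p ->
    on_constraint rho p ->
    (forall t x, 0 < rho t x) ->
    has_lbound (rho_values rho) ->
    0 < inf (rho_values rho) ->
    has_ubound (rho_values rho) ->
    (dev_normsq (sup (rho_values rho)) 1 (rho t0) < (sigma ^+ 2)%:E)%E ->
    forall t, t0 <= t ->
      (dev_normsq (sup (rho_values rho)) 1 (rho t) < (eps ^+ 2)%:E)%E.
Proof.
split.
  by split; [exact: BI_solution_cst | move=> t x; rewrite mulr1].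
move=> eps eps_gt0; exists eps; split=> // rho p t0 sol con rho_gt0 _ _ _ dev_t0 t _.
by rewrite (BI_constraint_rho_stationary sol con rho_gt0 t t0).
Qed.
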